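(* Let $G$ be a 2-connected subcubic graph and $e=uv\in E(G)$ such that $G-e$ is simple and 2-connected, and let $G_u$ be the graph obtained from $G-e$ by deleting $u$ and adding a new edge $f_u$ joining the two neighbours of $u$ other than $v$. Then $\widehat\delta(G,e)=\min\{\delta(G_u,f_u)+2,\ \widehat\delta(G_u,f_u)+1\}$.
   Context: Graphs may have loops and parallel edges unless called simple; a graph is subcubic if every vertex has degree at most 3. $n(G)$ is the number of vertices of $G$ and $n_2(G)$ the number of vertices of degree 2. A cycle is a connected 2-regular subgraph (a pair of parallel edges forms a cycle). An even cover of $G$ is a spanning subgraph $F$ in which every vertex has degree 0 or 2; its excess is $\mathrm{exc}(F)=2c(F)+i(F)$, where $c(F)$ is the number of cycles and $i(F)$ the number of isolated vertices of $F$. For $e\in E(G)$, let $\mathcal E(G,e)$ (resp. $\widehat{\mathcal E}(G,e)$) be the set of even covers of $G$ containing (resp. not containing) $e$, and define $\mathrm{exc}(G,e)=\min_{F\in\mathcal E(G,e)}\mathrm{exc}(F)-2$, $\widehat{\mathrm{exc}}(G,e)=\min_{F\in\widehat{\mathcal E}(G,e)}\mathrm{exc}(F)$, $\delta(G,e)=\mathrm{exc}(G,e)-\frac{n(G)+n_2(G)}4$, $\widehat\delta(G,e)=\widehat{\mathrm{exc}}(G,e)-\frac{n(G)+n_2(G)}4$. *)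

From mathcomp Require Import all_boot all_order all_algebra.
Set Implicit Arguments. Unset Strict Implicit. Unset Printing Implicit Defensive.
Import Order.TTheory GRing.Theory Num.Theory.

(* A finite multigraph: finite vertex type, finite edge type, and for every
   edge its (unordered) pair of ends, given as an ordered pair.  A loop is an
   edge whose two ends coincide. *)
Record mgraph := MGraph {
  vert : finType;
  edge : finType;
  ends : edge -> vert * vert }.

Section Basic.
Variable G : mgraph.

(* number of ends of edge f at x (a loop contributes 2) *)
Definition inc (x : vert G) (f : edge G) : nat :=
  ((ends f).1 == x) + ((ends f).2 == x).

(* degree of x in the spanning subgraph with edge set D *)
Definition deg_in (D : {set edge G}) (x : vert G) : nat := \sum_(f in D) inc x f.
Definition deg (x : vert G) : nat := deg_in setT x.

Definition subcubic : Prop := forall x, deg x <= 3.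

Definition adj_in (D : {set edge G}) : rel (vert G) :=
  fun x y => [exists f in D, (ends f == (x, y)) || (ends f == (y, x))].
Definition adj : rel (vert G) := adj_in setT.

Definition connected_on (D : {set edge G}) (S : {set vert G}) : Prop :=
  forall x y, x \in S -> y \in S ->
    connect (fun a b => [&& a \in S, b \in S & adj_in D a b]) x y.

Definition two_connected_in (D : {set edge G}) : Prop :=
  [/\ 2 < #|vert G|, connected_on D setT & forall z, connected_on D (setT :\ z)].
Definition two_connected : Prop := two_connected_in setT.

Definition simple_in (D : {set edge G}) : Prop :=
  (forall f, f \in D -> (ends f).1 != (ends f).2) /\
  (forall f g, f \in D -> g \in D -> f != g ->
     ends f != ends g /\ ends f != ((ends g).2, (ends g).1)).

Definition nG : nat := #|vert G|.
Definition n2G : nat := #|[set x | deg x == 2]|.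

Definition even_cover (F : {set edge G}) : bool :=
  [forall x, (deg_in F x == 0) || (deg_in F x == 2)].
(* cycles of an even cover F = connected components of (V, F) containing an edge *)
Definition ncycles (F : {set edge G}) : nat :=
  n_comp (adj_in F) [pred x | deg_in F x != 0].
Definition nisolated (F : {set edge G}) : nat := #|[set x | deg_in F x == 0]|.
Definition exc (F : {set edge G}) : nat := 2 * ncycles F + nisolated F.

(* minimum of a finite list of naturals; None (= +oo) for the empty list *)
Definition min_opt (s : seq nat) : option nat :=
  foldr (fun x acc => Some (if acc is Some y then minn x y else x)) None s.

Definition min_exc (P : pred {set edge G}) : option nat :=
  min_opt [seq exc F | F <- enum [pred F : {set edge G} | even_cover F && P F]].

Local Open Scope ring_scope.

(* extended rationals: None stands for +oo *)
Definition quarter_n : rat := ((nG + n2G)%:R / 4%:R).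

Definition exc_e (e : edge G) : option rat :=
  omap (fun m : nat => m%:R - 2%:R) (min_exc (fun F => e \in F)).
Definition exchat_e (e : edge G) : option rat :=
  omap (fun m : nat => m%:R) (min_exc (fun F => e \notin F)).
Definition delta (e : edge G) : option rat := omap (fun x => x - quarter_n) (exc_e e).
Definition deltahat (e : edge G) : option rat :=
  omap (fun x => x - quarter_n) (exchat_e e).

End Basic.

Local Open Scope ring_scope.
Definition omin (a b : option rat) : option rat :=
  match a, b with
  | Some x, Some y => Some (Num.min x y)
  | Some x, None => Some x
  | None, y => y
  end.
Definition oadd (a : option rat) (c : rat) : option rat := omap (fun x => x + c) a.
Local Close Scope ring_scope.

(* The graph G_u: from G - e delete u and add a new edge f_u (= None) joining
   w1 and w2. *)
Section Gu.
Variables (G : mgraph) (e : edge G) (u : vert G) (w1 w2 : {x : vert G | x != u}).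

Definition keepE : pred (edge G) :=
  fun f => [&& f != e, (ends f).1 != u & (ends f).2 != u].

Lemma keep1 f : keepE f -> (ends f).1 != u.
Proof. by case/and3P. Qed.
Lemma keep2 f : keepE f -> (ends f).2 != u.
Proof. by case/and3P. Qed.

Definition Gu_ends (o : option {f : edge G | keepE f}) :
    {x : vert G | x != u} * {x : vert G | x != u} :=
  match o with
  | Some f => (exist _ (ends (val f)).1 (keep1 (valP f)),
               exist _ (ends (val f)).2 (keep2 (valP f)))
  | None => (w1, w2)
  end.

Definition Gu : mgraph :=
  @MGraph {x : vert G | x != u} (option {f : edge G | keepE f}) Gu_ends.

Definition f_u : edge Gu := None.
End Gu.

(* Deleting u and replacing the path w1 u w2 by the edge f_u is a bijection
   between the even covers of G avoiding e and all even covers of G_u: an even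
   cover F avoiding e contains both or none of the edges u w1, u w2, and its
   image contains f_u exactly in the first case.  Cycles are preserved, and so
   are isolated vertices except u, which is isolated in F exactly when f_u is
   unused; hence exc F = exc F' + [f_u \notin F'].  Moreover u and v have degree
   3 in G (v because G - e is simple and 2-connected, hence of minimum degree 2),
   so G_u has one vertex fewer but one more vertex of degree 2, namely v, and
   n + n_2 is unchanged. *)

From mathcomp Require Import all_boot all_order all_algebra.
From mathcomp Require Import ring zify.
Import Order.TTheory GRing.Theory Num.Theory.
Set Implicit Arguments. Unset Strict Implicit. Unset Printing Implicit Defensive.

Definition ominn (a b : option nat) : option nat :=
  match a, b with
  | Some x, Some y => Some (minn x y)
  | Some x, None => Some x
  | None, y => y
  end.

Lemma min_optP s m : min_opt s = Some m -> m \in s /\ forall x, x \in s -> m <= x.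
Proof.
elim: s m => //= x s IH m [<-]; case E: (min_opt s) => [y|].
  have [ys ylb] := IH y E; split.
    by rewrite /minn; case: ifP => _; rewrite inE ?eqxx ?ys ?orbT.
  move=> z /predU1P[->|zs]; first exact: geq_minl.
  exact: leq_trans (geq_minr _ _) (ylb _ zs).
by case: s E {IH} => // _; split=> [|z]; rewrite ?inE // => /eqP->.
Qed.

Lemma eq_min_opt s1 s2 : s1 =i s2 -> min_opt s1 = min_opt s2.
Proof.
have nil_min s : min_opt s = None -> s = [::] by case: s.
move=> eqs; case E1: (min_opt s1) => [m1|]; case E2: (min_opt s2) => [m2|].
- have [m1s1 lb1] := min_optP E1; have [m2s2 lb2] := min_optP E2.
  by congr Some; apply/eqP; rewrite eqn_leq lb1 ?eqs // lb2 -?eqs.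
- by have [] := min_optP E1; rewrite eqs (nil_min _ E2).
- by have [] := min_optP E2; rewrite -eqs (nil_min _ E1).
- by [].
Qed.

Lemma min_opt_cat s t : min_opt (s ++ t) = ominn (min_opt s) (min_opt t).
Proof.
elim: s => [|x s IH] /=; first by case: (min_opt t).
by rewrite IH; case: (min_opt s) => [a|]; case: (min_opt t) => [b|] //=; rewrite minnA.
Qed.

Lemma min_opt_map_succ s : min_opt (map succn s) = omap succn (min_opt s).
Proof.
by elim: s => [|x s IH] //=; rewrite IH; case: (min_opt s) => [a|] //=; rewrite minnSS.
Qed.

Lemma sum_option (T : finType) (F : option T -> nat) :
  \sum_(o : option T) F o = F None + \sum_(t : T) F (Some t).
Proof.
rewrite (bigD1 None) //=; congr (_ + _).
rewrite (reindex_omap Some (fun o => o)) //=; last by case.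
by apply: eq_bigl => t; rewrite eqxx.
Qed.

Lemma connect_step (T : finType) (r : rel T) x y :
  connect r x y -> x != y -> exists z, r x z.
Proof.
case/connectP => -[|z p] /=; first by move=> _ ->; rewrite eqxx.
by case/andP => rxz _ _ _; exists z.
Qed.

Section Incidence.
Variable K : mgraph.
Implicit Types (x y z : vert K) (f : edge K) (D : {set edge K}).

Definition joins f x y : Prop := ends f = (x, y) \/ ends f = (y, x).

Lemma joins_sym f x y : joins f x y -> joins f y x.
Proof. by case; [right|left]. Qed.

Lemma joins_inj f x y z : joins f x y -> joins f x z -> y = z.
Proof. by rewrite /joins; case=> ->; case=> -[] *; congruence. Qed.

Lemma inc_joins_gt0 f x y : joins f x y -> 0 < inc x f.
Proof. by rewrite /inc; case=> -> /=; rewrite eqxx ?addn1. Qed.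

Lemma inc_joins f x y z : joins f x y -> z != x -> inc z f = (y == z).
Proof. by rewrite /inc eq_sym => + /negbTE zx; case=> -> /=; rewrite zx ?addn0. Qed.

Lemma inc_joins_end f x y : joins f x y -> y != x -> inc x f = 1.
Proof.
by move=> jf /negbTE yx; rewrite /inc; case: jf => ->; rewrite /= eqxx yx.
Qed.

Lemma adj_inP D x y : reflect (exists2 f, f \in D & joins f x y) (adj_in D x y).
Proof.
apply: (iffP existsP) => [[f /andP[fD /orP[]/eqP E]]|[f fD E]].
- by exists f => //; left.
- by exists f => //; right.
- by exists f; rewrite fD /=; case: E => ->; rewrite eqxx ?orbT.
Qed.

Lemma adj_in_sym D : symmetric (adj_in D).
Proof. by move=> x y; apply/adj_inP/adj_inP => -[f fD /joins_sym]; exists f. Qed.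

Lemma deg_in_bigD1 D f x : f \in D -> deg_in D x = inc x f + deg_in (D :\ f) x.
Proof.
move=> fD; rewrite /deg_in (bigD1 f) //; congr (_ + _).
by apply: eq_bigl => g; rewrite !inE andbC.
Qed.

Lemma adj_in_deg_neq0 D x y : adj_in D x y -> deg_in D x != 0.
Proof.
case/adj_inP => f fD jf; rewrite (deg_in_bigD1 _ fD) -lt0n.
exact: leq_trans (inc_joins_gt0 jf) (leq_addr _ _).
Qed.

(* Two incident edges: one towards a neighbour z, and the first edge of a path
   from x avoiding z. *)
Lemma two_connected_deg_in_gt1 D x :
  simple_in D -> two_connected_in D -> 1 < deg_in D x.
Proof.
move=> [noloop _] [cardV conn conn2].
have [y xy] : exists y, x != y.
  case: (pickP (predC1 x)) => [y yx|none]; first by exists y; rewrite eq_sym.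
  by move: cardV; have := cardC1 x; rewrite (eq_card0 none); lia.
have [z /and3P[_ _ /adj_inP[f fD jf]]] :=
  connect_step (conn x y (in_setT x) (in_setT y)) xy.
have xz : x != z by have := noloop f fD; case: jf => ->; rewrite // eq_sym.
have [w wxz] : exists w, w \notin [set x; z].
  have : ~~ ([set: vert K] \subset [set x; z]).
    by apply/negP => /subset_leq_card; rewrite cardsT; have := cards2 x z; lia.
  by case/subsetPn => w _ wxz; exists w.
have [xZ wZ] : x \in setT :\ z /\ w \in setT :\ z.
  by move: wxz; rewrite !inE negb_or eq_sym xz => /andP[_ ->].
have wx : x != w by move: wxz; rewrite !inE negb_or eq_sym => /andP[].
have [b /and3P[_ bZ /adj_inP[f' f'D jf']]] := connect_step (conn2 z x w xZ wZ) wx.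
have ff' : f' != f.
  apply/eqP => ff'; rewrite ff' in jf'; rewrite (joins_inj jf jf') in bZ.
  by rewrite !inE eqxx in bZ.
rewrite (deg_in_bigD1 _ fD) (deg_in_bigD1 (f := f')) ?inE ?ff' //.
by have := inc_joins_gt0 jf; have := inc_joins_gt0 jf'; lia.
Qed.

Lemma subcubic_incident x (f1 f2 f3 : edge K) :
  deg x <= 3 -> f1 != f2 -> f1 != f3 -> f2 != f3 ->
  0 < inc x f1 -> 0 < inc x f2 -> 0 < inc x f3 ->
  inc x f1 = 1 /\ forall f, f != f1 -> f != f2 -> f != f3 -> inc x f = 0.
Proof.
move=> degx f12 f13 f23 i1 i2 i3.
have f2D : f2 \in setT :\ f1 by rewrite !inE eq_sym f12.
have f3D : f3 \in setT :\ f1 :\ f2 by rewrite !inE eq_sym f23 eq_sym f13.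
move: degx; rewrite /deg (deg_in_bigD1 _ (in_setT f1)) (deg_in_bigD1 _ f2D).
rewrite (deg_in_bigD1 _ f3D) => degx; split=> [|f ff1 ff2 ff3]; first by lia.
have fD : f \in setT :\ f1 :\ f2 :\ f3 by rewrite !inE ff1 ff2 ff3.
by move: degx; rewrite (deg_in_bigD1 _ fD); lia.
Qed.

End Incidence.

Section Reduction.
Variables (G : mgraph) (e g1 g2 : edge G) (u v : vert G) (w1 w2 : {x : vert G | x != u}).
Hypotheses (joins_e : joins e u v) (joins_g1 : joins g1 u (val w1))
  (joins_g2 : joins g2 u (val w2)) (vu : v != u) (w1v : val w1 != v)
  (w2v : val w2 != v) (w12 : w1 != w2)
  (inc_u_other : forall f, f != e -> f != g1 -> f != g2 -> inc u f = 0).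

Local Notation GU := (Gu e w1 w2).

Lemma e_neq_g1 : e != g1.
Proof.
by apply: contraNneq w1v => eg1; rewrite -(joins_inj joins_e (z := val w1)) ?eg1.
Qed.

Lemma e_neq_g2 : e != g2.
Proof.
by apply: contraNneq w2v => eg2; rewrite -(joins_inj joins_e (z := val w2)) ?eg2.
Qed.

Lemma g1_neq_g2 : g1 != g2.
Proof.
apply: contraNneq w12 => g12; apply/eqP/val_inj.
by rewrite -(joins_inj joins_g1 (z := val w2)) ?g12.
Qed.

Lemma keepE_neq f : keepE e u f = [&& f != e, f != g1 & f != g2].
Proof.
rewrite /keepE; have [->|fe] //= := eqVneq f e.
have [->|fg1] /= := eqVneq f g1; first by case: joins_g1 => ->; rewrite !eqxx ?andbF.
have [->|fg2] /= := eqVneq f g2; first by case: joins_g2 => ->; rewrite !eqxx ?andbF.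
by move: (inc_u_other fe fg1 fg2); rewrite /inc => /eqP; rewrite addn_eq0 !eqb0.
Qed.

Lemma deg_in_split (D : {set edge G}) y : deg_in D y =
  (e \in D) * inc y e + (g1 \in D) * inc y g1 + (g2 \in D) * inc y g2 +
  \sum_(f | keepE e u f) (f \in D) * inc y f.
Proof.
rewrite /deg_in big_mkcond (bigD1 e) // (bigD1 g1) 1?eq_sym ?e_neq_g1 //.
rewrite (bigD1 g2) /= 1?eq_sym ?e_neq_g2 1?eq_sym ?g1_neq_g2 // !mulnbl !addnA.
by apply: congr1; apply: eq_big => [f|f _]; rewrite ?keepE_neq ?mulnbl ?andbA.
Qed.

Lemma deg_in_u (D : {set edge G}) : e \notin D -> deg_in D u = (g1 \in D) + (g2 \in D).
Proof.
move=> eD; rewrite deg_in_split (negbTE eD) (inc_joins_end joins_g1 (valP w1)).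
rewrite (inc_joins_end joins_g2 (valP w2)) !muln1 big1 ?addn0 // => f.
by rewrite keepE_neq => /and3P[fe fg1 fg2]; rewrite inc_u_other ?muln0.
Qed.

Lemma mem_g1_g2 (D : {set edge G}) :
  even_cover D -> e \notin D -> (g1 \in D) = (g2 \in D).
Proof. by move=> /forallP/(_ u) + eD; rewrite deg_in_u //; do 2!case: (_ \in D). Qed.

Definition proj (D : {set edge G}) : {set edge GU} :=
  [set o | if o is Some k then val k \in D else g1 \in D].

Definition lift (D' : {set edge GU}) : {set edge G} :=
  [set f | if insub f is Some k then Some k \in D'
           else (None \in D') && ((f == g1) || (f == g2))].

Lemma lift_e D' : e \notin lift D'.
Proof.
by rewrite inE insubF ?keepE_neq ?eqxx // (negbTE e_neq_g1) (negbTE e_neq_g2) andbF.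
Qed.

Lemma mem_g1_lift D' : (g1 \in lift D') = (None \in D').
Proof. by rewrite inE insubF ?keepE_neq ?eqxx ?andbF // andbT. Qed.

Lemma mem_g2_lift D' : (g2 \in lift D') = (None \in D').
Proof. by rewrite inE insubF ?keepE_neq ?eqxx ?andbF // orbT andbT. Qed.

Lemma proj_lift D' : proj (lift D') = D'.
Proof. by apply/setP => -[k|]; rewrite inE ?mem_g1_lift // inE valK. Qed.

Lemma inc_Gu_None (x : vert GU) : inc x (None : edge GU) = inc (val x) g1 + inc (val x) g2.
Proof.
by rewrite (inc_joins joins_g1 (valP x)) (inc_joins joins_g2 (valP x)) /inc /= !val_eqE.
Qed.

Lemma inc_Gu_Some (x : vert GU) k : inc x (Some k : edge GU) = inc (val x) (val k).
Proof. by rewrite /inc /= -!val_eqE. Qed.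

Section Projection.
Variable D : {set edge G}.
Hypotheses (eD : e \notin D) (g12D : (g1 \in D) = (g2 \in D)).

Lemma deg_in_proj (x : vert GU) : deg_in (proj D) x = deg_in D (val x).
Proof.
rewrite deg_in_split (negbTE eD) /deg_in big_mkcond sum_option inE inc_Gu_None.
rewrite -g12D -mulnbl mulnDr add0n; congr (_ + _).
rewrite [RHS](reindex_omap (val : {f | keepE e u f} -> _) insub) => [|f kf].
  by apply: eq_big => [k|k _]; rewrite ?(valP k) ?valK ?eqxx // inE inc_Gu_Some mulnbl.
by rewrite insubT.
Qed.

Lemma even_cover_proj : even_cover (proj D) = even_cover D.
Proof.
apply/forallP/forallP => evD x; last by rewrite deg_in_proj.
have [->|xu] := eqVneq x u; first by rewrite deg_in_u // -g12D; case: (g1 \in D).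
by have := evD (Sub x xu); rewrite deg_in_proj.
Qed.

Lemma nisolated_proj : nisolated D = nisolated (proj D) + (g1 \notin D).
Proof.
rewrite /nisolated (cardsD1 u) addnC inE deg_in_u // -g12D.
congr (_ + _); last by case: (g1 \in D).
rewrite -(card_imset _ val_inj); apply: eq_card => y; rewrite !inE.
have [->|yu] := eqVneq y u.
  by apply/esym/negbTE/imsetP => -[x _ xu]; move: (valP x); rewrite -xu eqxx.
by rewrite -[y]/(val (Sub y yu : vert GU)) mem_imset ?inE ?deg_in_proj //; exact: val_inj.
Qed.

Lemma connect_proj_w1 (x : vert GU) :
  adj_in D u (val x) -> connect (adj_in (proj D)) w1 x.
Proof.
case/adj_inP => f fD jf.
have fe : f != e by apply: contraNneq eD => <-.
have [fg1|fg1] := eqVneq f g1.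
  by rewrite (val_inj (joins_inj joins_g1 (z := val x) _)) -?fg1.
have [fg2|fg2] := eqVneq f g2; last by have := inc_joins_gt0 jf; rewrite inc_u_other.
rewrite -(val_inj (joins_inj joins_g2 (z := val x) _)) -?fg2 //.
by apply: connect1; apply/adj_inP; exists None; [rewrite inE g12D -fg2 | left].
Qed.

Lemma connect_w1_w2 : g1 \in D -> connect (adj_in D) (val w1) (val w2).
Proof.
move=> g1D; apply: (connect_trans (y := u)); apply: connect1; apply/adj_inP.
  by exists g1 => //; apply: joins_sym.
by exists g2; rewrite -?g12D.
Qed.

Lemma adj_in_proj (x y : vert GU) :
  adj_in D (val x) (val y) -> adj_in (proj D) x y.
Proof.
case/adj_inP => f fD jf.
have kf : keepE e u f.
  have fe : f != e by apply: contraNneq eD => <-.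
  by have := valP x; have := valP y; rewrite /keepE fe; case: jf => -> /= -> ->.
apply/adj_inP; exists (Some (Sub f kf)); first by rewrite inE.
by case: jf => jf; [left | right]; apply/eqP; rewrite xpair_eqE -!val_eqE /= jf !eqxx.
Qed.

Lemma connect_adj_proj (x y : vert GU) :
  adj_in (proj D) x y -> connect (adj_in D) (val x) (val y).
Proof.
case/adj_inP => -[k|]; rewrite inE => kD jk.
  apply: connect1; apply/adj_inP; exists (val k) => //.
  by case: jk => -[<- <-]; [left | right]; rewrite -surjective_pairing.
have symD := sym_connect_sym (adj_in_sym D).
by case: jk => -[<- <-]; [|rewrite symD]; exact: connect_w1_w2.
Qed.

Lemma ncycles_proj : ncycles D = ncycles (proj D).
Proof.
have symD := sym_connect_sym (adj_in_sym D).
have symP := sym_connect_sym (adj_in_sym (proj D)).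
have clD : closed (adj_in D) [pred x | deg_in D x != 0].
  apply: (intro_closed symD) => x y xy _.
  by apply: (adj_in_deg_neq0 (y := x)); rewrite adj_in_sym.
rewrite /ncycles (adjunction_n_comp val symD symP clD).
  by apply: eq_n_comp_r => x; rewrite !inE /= deg_in_proj.
apply: (intro_adjunction symP clD (fun x _ => odflt w1 (insub x))) => [x Dx | x' _]; split.
- case: insubP => [x' _ <- //|/negPn/eqP xu]; subst x.
  apply: connect1; apply/adj_inP; exists g1 => //.
  by move: Dx; rewrite inE /= deg_in_u // -g12D; case: (g1 \in D).
- move=> y _; case: (insubP _ x) => [x' _ <-|/negPn/eqP->];
    case: (insubP _ y) => [y' _ <-|/negPn/eqP->] xy.
  + by apply: connect1; apply: adj_in_proj.
  + by rewrite symP; apply: connect_proj_w1; rewrite adj_in_sym.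
  + exact: connect_proj_w1.
  + exact: connect0.
- by rewrite valK.
- exact: connect_adj_proj.
Qed.

Lemma exc_proj : exc D = exc (proj D) + (g1 \notin D).
Proof. by rewrite /exc ncycles_proj nisolated_proj addnA. Qed.

End Projection.

Lemma even_cover_lift D' : even_cover D' -> even_cover (lift D').
Proof.
move=> evD'; rewrite -even_cover_proj ?lift_e ?proj_lift //.
by rewrite mem_g1_lift mem_g2_lift.
Qed.

Lemma exc_lift D' : exc (lift D') = exc D' + (None \notin D').
Proof.
by rewrite exc_proj ?lift_e ?proj_lift ?mem_g1_lift // mem_g2_lift.
Qed.

Lemma min_exc_Gu :
  min_exc (fun F : {set edge G} => e \notin F) =
  ominn (min_exc (fun F : {set edge GU} => f_u e w1 w2 \in F))
        (omap succn (min_exc (fun F : {set edge GU} => f_u e w1 w2 \notin F))).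
Proof.
rewrite /min_exc -min_opt_map_succ -min_opt_cat; apply: eq_min_opt => n.
rewrite mem_cat -map_comp; apply/mapP/orP => [[F]|].
  rewrite mem_enum => /andP[evF eF] ->.
  have g12F := mem_g1_g2 evF eF.
  have evP : even_cover (proj F) by rewrite even_cover_proj.
  rewrite exc_proj //; case g1F: (g1 \in F); [left | right]; apply/mapP;
    by exists (proj F); rewrite ?mem_enum ?inE ?evP ?g1F ?addn0 ?addn1.
by case=> /mapP[F']; rewrite mem_enum => /andP[evF' F'fu] ->; exists (lift F');
  rewrite ?mem_enum ?unfold_in /= ?even_cover_lift ?lift_e ?exc_lift ?F'fu ?addn0 ?addn1.
Qed.

Lemma deg_u : deg u = 3.
Proof.
rewrite /deg deg_in_split !inE (inc_joins_end joins_e vu).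
rewrite (inc_joins_end joins_g1 (valP w1)) (inc_joins_end joins_g2 (valP w2)) big1 // => f.
by rewrite keepE_neq => /and3P[fe fg1 fg2]; rewrite inc_u_other ?muln0.
Qed.

Lemma deg_Gu (x : vert GU) : deg x = deg (val x) - (v == val x).
Proof.
rewrite /deg; have -> : [set: edge GU] = proj (setT :\ e).
  apply/setP => -[k|]; rewrite !inE ?andbT ?(valP k) //=.
    by case/and3P: (valP k).
  by rewrite eq_sym e_neq_g1.
rewrite deg_in_proj ?setD11 // ?inE ?andbT 1?eq_sym ?e_neq_g1 1?eq_sym ?e_neq_g2 //.
by rewrite (deg_in_bigD1 _ (in_setT e)) (inc_joins joins_e (valP x)) addKn.
Qed.

Lemma n_n2_Gu : deg v = 3 -> nG GU + n2G GU = nG G + n2G G.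
Proof.
move=> degv.
have n2 : n2G GU = (n2G G).+1.
  have <- : #|v |: [set y | deg y == 2]| = (n2G G).+1 by rewrite cardsU1 inE degv.
  rewrite /n2G -(card_imset _ val_inj); apply: eq_card => y; rewrite !inE.
  have [->|yu] := eqVneq y u.
    rewrite deg_u eq_sym (negbTE vu); apply/negbTE/imsetP => -[x _ xu].
    by move: (valP x); rewrite -xu eqxx.
  rewrite -[y]/(val (Sub y yu : vert GU)) mem_imset ?inE ?deg_Gu /=; last exact: val_inj.
  by have [->|yv] := eqVneq y v; rewrite ?degv ?subn0.
have n1 : nG GU = (nG G).-1.
  by rewrite /nG card_sig (eq_card (fun x => erefl (x != u))) cardC1.
have n0 : 0 < nG G by apply/card_gt0P; exists u.
by rewrite n1 n2 addnS -addSn prednK.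
Qed.

End Reduction.

Section ExtendedRat.
Local Open Scope ring_scope.

Lemma omin_shift (q : rat) (A B : option nat) :
  omap (fun x => x - q) (omap (fun m : nat => m%:R) (ominn A (omap succn B))) =
  omin (oadd (omap (fun x => x - q) (omap (fun m : nat => m%:R - 2%:R) A)) 2%:R)
       (oadd (omap (fun x => x - q) (omap (fun m : nat => m%:R) B)) 1%:R).
Proof.
have succE n : n.+1%:R - q = n%:R - q + 1 :> rat by rewrite -addn1 natrD; ring.
case: A => [a|]; case: B => [b|] //=; congr Some; rewrite ?succE; try ring.
rewrite (_ : a%:R - 2%:R - q + 2%:R = a%:R - q) -?succE; last by ring.
by case: leqP => ab; [rewrite min_l | rewrite min_r]; rewrite ?lerD2r ?ler_nat // ltnW.
Qed.

End ExtendedRat.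

Theorem mainTheorem10 (G : mgraph) (e : edge G) (u v : vert G)
    (w1 w2 : {x : vert G | x != u}) :
  two_connected G -> subcubic G ->
  (ends e = (u, v) \/ ends e = (v, u)) ->
  simple_in (setT :\ e) -> two_connected_in (setT :\ e) ->
  w1 != w2 ->
  [set y | (y != v) && adj u y] = [set val w1; val w2] ->
  deltahat e =
    omin (oadd (delta (f_u e w1 w2)) 2%:R)
         (oadd (deltahat (f_u e w1 w2)) 1%:R).
Proof.
move=> _ subG joins_e simple_Ge conn_Ge w12 nbr_u.
have /andP[w1v /adj_inP[g1 _ joins_g1]] : (val w1 != v) && adj u (val w1).
  by move/setP/(_ (val w1)): nbr_u; rewrite !inE eqxx.
have /andP[w2v /adj_inP[g2 _ joins_g2]] : (val w2 != v) && adj u (val w2).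
  by move/setP/(_ (val w2)): nbr_u; rewrite !inE eqxx orbT.
have [inc_u_e inc_u_other] := subcubic_incident (subG u)
  (e_neq_g1 joins_e joins_g1 w1v) (e_neq_g2 joins_e joins_g2 w2v)
  (g1_neq_g2 joins_g1 joins_g2 w12)
  (inc_joins_gt0 joins_e) (inc_joins_gt0 joins_g1) (inc_joins_gt0 joins_g2).
have vu : v != u.
  by apply/eqP => vu; move: inc_u_e; rewrite /inc; case: joins_e => ->; rewrite vu eqxx.
have degv : deg v = 3.
  have := two_connected_deg_in_gt1 v simple_Ge conn_Ge; have := subG v.
  rewrite /deg (deg_in_bigD1 _ (in_setT e)) (inc_joins_end (joins_sym joins_e)) 1?eq_sym //.
  lia.
rewrite /deltahat /delta /exc_e /exchat_e (min_exc_Gu joins_e joins_g1 joins_g2) //.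
by rewrite /quarter_n (n_n2_Gu joins_e joins_g1 joins_g2) //; exact: omin_shift.
Qed.
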